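(* Let $S=\{0,a,b\}\subseteq\mathbb{Z}$ with $a,b>0$, $a$ even and $b$ odd. Let $\chi$ be the alternating block 4-coloring of $\mathbb{Z}$ relative to $S$. Then every translate $n+S=\{n,n+a,n+b\}$, $n\in\mathbb{Z}$, contains elements of three different colors under $\chi$.
   Context: The alternating block 4-coloring relative to $S=\{0,a,b\}$ is defined as follows. For $m\in\mathbb{Z}$, let $q_m,r_m$ be the unique integers with $m=2aq_m+r_m$ and $-a\le r_m<a$. Let $X(m)=0$ if $r_m\ge0$ and $X(m)=1$ otherwise; let $Y(m)=0$ if $m$ is even and $Y(m)=1$ otherwise. Then $\chi(m)=(X(m),Y(m))$, a coloring with four colors. *)

From Stdlib Require Import ZArith Lia.
Open Scope Z_scope.

Definition blk_rem (a m : Z) : Z := (m + a) mod (2 * a) - a.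
Definition blk_quot (a m : Z) : Z := (m + a) / (2 * a).

Lemma blk_spec (a m : Z) : 0 < a ->
  m = 2 * a * blk_quot a m + blk_rem a m /\ - a <= blk_rem a m < a.
Proof.
  intro Ha. unfold blk_rem, blk_quot.
  pose proof (Z.div_mod (m + a) (2 * a) ltac:(lia)).
  pose proof (Z.mod_pos_bound (m + a) (2 * a) ltac:(lia)). lia.
Qed.

Definition X (a m : Z) : Z := if 0 <=? blk_rem a m then 0 else 1.
Definition Y (m : Z) : Z := if Z.even m then 0 else 1.

Definition chi (a m : Z) : Z * Z := (X a m, Y m).

(* The two coordinates of the coloring separate the three pairs of [n + S]:
   shifting by [a] moves the block remainder by [a] into the other half of its
   window [-a, a), so [X] flips, while [Y] is preserved by the even shift [a]
   and flipped by the odd shifts [b] and [b - a]. *)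
From Stdlib Require Import ZArith Lia.
Open Scope Z_scope.

Lemma blk_rem_add_half (a m : Z) : 0 < a ->
  blk_rem a (m + a) =
  if blk_rem a m <? 0 then blk_rem a m + a else blk_rem a m - a.
Proof.
  intro Ha. unfold blk_rem.
  replace (m + a + a) with ((m + a) + a) by lia.
  rewrite <- Z.add_mod_idemp_l by lia.
  pose proof (Z.mod_pos_bound (m + a) (2 * a) ltac:(lia)).
  set (t := (m + a) mod (2 * a)) in *.
  destruct (Z.ltb_spec (t - a) 0).
  - rewrite Z.mod_small by lia. lia.
  - rewrite (Z.mod_unique (t + a) (2 * a) 1 (t - a)) by lia. lia.
Qed.

Lemma X_add_half_neq (a m : Z) : 0 < a -> X a m <> X a (m + a).
Proof.
  intro Ha. unfold X. rewrite (blk_rem_add_half a m Ha).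
  destruct (blk_spec a m Ha) as [_ Hr].
  destruct (Z.ltb_spec (blk_rem a m) 0).
  - rewrite (proj2 (Z.leb_gt 0 (blk_rem a m))), (proj2 (Z.leb_le 0 (blk_rem a m + a)))
      by lia.
    discriminate.
  - rewrite (proj2 (Z.leb_le 0 (blk_rem a m))), (proj2 (Z.leb_gt 0 (blk_rem a m - a)))
      by lia.
    discriminate.
Qed.

Lemma Y_add_even (m k : Z) : Z.even k = true -> Y (m + k) = Y m.
Proof. intro Hk. unfold Y. rewrite Z.even_add, Hk. now destruct (Z.even m). Qed.

Lemma Y_add_odd_neq (m k : Z) : Z.odd k = true -> Y m <> Y (m + k).
Proof.
  intro Hk. unfold Y. rewrite Z.even_add, <- (Z.negb_odd k), Hk.
  now destruct (Z.even m).
Qed.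

Theorem mainTheorem20 (a b : Z) (ha : 0 < a) (hb : 0 < b)
  (ha_even : Z.even a = true) (hb_odd : Z.odd b = true) :
  forall n : Z,
    chi a n <> chi a (n + a) /\
    chi a n <> chi a (n + b) /\
    chi a (n + a) <> chi a (n + b).
Proof.
  intro n. unfold chi.
  split; [| split]; intro Hchi; injection Hchi as HX HY.
  - exact (X_add_half_neq a n ha HX).
  - exact (Y_add_odd_neq n b hb_odd HY).
  - rewrite (Y_add_even n a ha_even) in HY. exact (Y_add_odd_neq n b hb_odd HY).
Qed.
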